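(* Let $G$ be a graph, $X\subseteq V(G)$ a set such that $F := G-X$ is a pseudoforest, and $k$ an integer. If $G$ has an independent set of size at least $k$, then $G$ has an independent set $I$ with $|I|\ge k$ that contains no unnecessary triple, i.e. there is no unnecessary triple ${}_3X\subseteq X$ with ${}_3X \subseteq I$.
   Context: All graphs are finite, simple and undirected; a pseudoforest is a graph each of whose connected components contains at most one cycle. An anchor triangle is a connected component $P$ of $F=G-X$ with $V(P)=\{p_1,p_2,p_3\}$ such that there are vertices $x_1,x_2,x_3\in X$ with $N_G(p_1)=\{p_2,p_3,x_1\}$, $N_G(p_2)=\{p_1,p_3,x_2\}$, $N_G(p_3)=\{p_1,p_2,x_3\}$. A triple (3-element set) ${}_3X\subseteq X$ is unnecessary if there exists an anchor triangle $P$ with $N_G(V(P)) = {}_3X$, where $N_G(S)$ denotes the set of vertices outside $S$ adjacent to some vertex of $S$. *)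

(* A finite simple graph G is a symmetric irreflexive
   relation e on a finType T. *)
From mathcomp Require Import all_boot.
Set Implicit Arguments. Unset Strict Implicit. Unset Printing Implicit Defensive.

Section Graphs.
Variable T : finType.
Variable e : rel T.

Definition nbr (v : T) : {set T} := [set y | e v y].

Definition nbrs (S : {set T}) : {set T} :=
  [set y | (y \notin S) && [exists s in S, e s y]].

Definition independent (I : {set T}) : Prop :=
  forall x y, x \in I -> y \in I -> ~~ e x y.

Variable X : {set T}.

Definition fe : rel T := fun x y => [&& e x y, x \notin X & y \notin X].

Definition fcomp (v : T) : {set T} := [set y | connect fe v y].

(* A cycle of F, given as its (nonempty) set of edges, each edge an
   unordered pair {x,y} of F; every vertex has degree 0 or 2 in it, and
   the vertices it covers are connected using its edges. *)
Definition is_cycle (C : {set {set T}}) : Prop :=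
  [/\ C != set0,
      (forall c, c \in C -> exists x y, [/\ x != y, c = [set x; y] & fe x y]),
      (forall v, let d := #|[set c in C | v \in c]| in d = 0 \/ d = 2) &
      (forall u v, u \in cover C -> v \in cover C ->
         connect (fun x y => [set x; y] \in C) u v)].

(* F is a pseudoforest: each connected component of F contains at most one
   cycle, i.e. two cycles lying in the same component coincide. *)
Definition pseudoforest : Prop :=
  forall C1 C2 u v, is_cycle C1 -> is_cycle C2 ->
    u \in cover C1 -> v \in cover C2 -> connect fe u v -> C1 = C2.

Definition anchor_triangle (P : {set T}) : Prop :=
  (exists2 p, p \notin X & P = fcomp p) /\
  exists p1 p2 p3 x1 x2 x3,
    [/\ P = [set p1; p2; p3], #|P| = 3,
        [/\ x1 \in X, x2 \in X & x3 \in X] &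
        [/\ nbr p1 = [set p2; p3; x1], nbr p2 = [set p1; p3; x2]
          & nbr p3 = [set p1; p2; x3]]].

Definition unnecessary (Y : {set T}) : Prop :=
  [/\ Y \subset X, #|Y| = 3 & exists2 P, anchor_triangle P & nbrs P = Y].

End Graphs.

(* Among the independent sets of size at least k take one, I, meeting X in as
   few vertices as possible. If I contained an unnecessary triple N_G(P) of an
   anchor triangle P = {p1,p2,p3}, then all three anchors x_i lie in I, so no p_i
   is in I; hence p1 |: (I :\ x1) is again independent (the only neighbours of
   p1 besides x1 are p2 and p3), has the same size, and meets X in fewer
   vertices. *)
From mathcomp Require Import all_boot.
From Stdlib Require Import Classical.

Set Implicit Arguments.
Unset Strict Implicit.
Unset Printing Implicit Defensive.

Section Swap.

Variables (T : finType) (e : rel T).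
Hypotheses (e_sym : symmetric e) (e_irr : irreflexive e).

Lemma independent_swap (I : {set T}) (x p : T) :
  independent e I -> (forall y, y \in I :\ x -> ~~ e p y) ->
  independent e (p |: (I :\ x)).
Proof.
move=> indI pI y z; rewrite !in_setU1.
case/predU1P=> [-> | yI]; case/predU1P=> [-> | zI].
- by rewrite e_irr.
- exact: pI.
- by rewrite e_sym; apply: pI.
- by apply: indI; [case/setD1P: yI | case/setD1P: zI].
Qed.

Lemma card_swap (I : {set T}) (x p : T) :
  x \in I -> p \notin I -> #|p |: (I :\ x)| = #|I|.
Proof.
move=> xI pI; rewrite cardsU1 in_setD1 (negPf pI) andbF add1n.
by rewrite (cardsD1 x I) xI.
Qed.

Variable X : {set T}.

Lemma fcomp_notin (p q : T) : p \notin X -> q \in fcomp e X p -> q \notin X.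
Proof.
move=> pX; rewrite inE => /connectP [s]; case/lastP: s => [_ -> // | s z].
by rewrite rcons_path last_rcons => /andP [_ /and3P [_ _ zX]] ->.
Qed.

Lemma unnecessary_swap_vertex (I Y : {set T}) :
  independent e I -> unnecessary e X Y -> Y \subset I ->
  exists p x, [/\ p \notin X, p \notin I, x \in I :&: X &
                  forall y, y \in I :\ x -> ~~ e p y].
Proof.
move=> indI [_ _ [P [[p pX defP] [p1 [p2 [p3 [x1 [x2 [x3
  [P123 _ [x1X x2X x3X] [N1 N2 N3]]]]]]]]] defY]] YI.
have PnX q : q \in P -> q \notin X by rewrite defP; apply: fcomp_notin.
have anchorI q x : q \in P -> x \in X -> e q x -> x \in I.
  move=> qP xX eqx; apply: (subsetP YI); rewrite -defY inE.
  have xP : x \notin P by apply: contraL xX; apply: PnX.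
  by rewrite xP; apply/existsP; exists q; rewrite qP.
have notI q x : x \in I -> e q x -> q \notin I.
  by move=> xI eqx; apply: contraL (indI _ _ ^~ xI) _; rewrite eqx.
have [p1P p2P p3P] : [/\ p1 \in P, p2 \in P & p3 \in P].
  by rewrite P123 !inE !eqxx !orbT.
have nbr_anchor q x N : nbr e q = N -> x \in N -> e q x.
  by move=> <-; rewrite inE.
have e1 : e p1 x1 by apply: (nbr_anchor _ _ _ N1); rewrite !inE eqxx !orbT.
have e2 : e p2 x2 by apply: (nbr_anchor _ _ _ N2); rewrite !inE eqxx !orbT.
have e3 : e p3 x3 by apply: (nbr_anchor _ _ _ N3); rewrite !inE eqxx !orbT.
have x1I := anchorI _ _ p1P x1X e1.
have p2I := notI _ _ (anchorI _ _ p2P x2X e2) e2.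
have p3I := notI _ _ (anchorI _ _ p3P x3X e3) e3.
exists p1, x1; split.
- exact: PnX.
- exact: notI x1I e1.
- by rewrite inE x1I.
- move=> y /setD1P [yx1 yI]; apply: contraL yI => ep1y.
  have : y \in nbr e p1 by rewrite inE.
  by rewrite N1 !inE (negPf yx1) orbF => /orP [] /eqP ->.
Qed.

Lemma unnecessary_swap (I Y : {set T}) :
  independent e I -> unnecessary e X Y -> Y \subset I ->
  exists I', [/\ independent e I', #|I'| = #|I| & #|I' :&: X| < #|I :&: X|].
Proof.
move=> indI uY YI.
have [p [x [pX pI /setIP [xI xX] pIx]]] := unnecessary_swap_vertex indI uY YI.
exists (p |: (I :\ x)); split; first exact: independent_swap.
  exact: card_swap.
have pXE : [set p] :&: X = set0.
  by apply/setP => z; rewrite !inE; apply/andP => -[/eqP -> zX]; rewrite zX in pX.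
by rewrite setIUl pXE set0U setIDAC (cardsD1 x (I :&: X)) inE xI xX.
Qed.

End Swap.

Theorem lemma2 (T : finType) (e : rel T) (X : {set T}) (k : nat) :
  symmetric e -> irreflexive e ->
  pseudoforest e X ->
  (exists I : {set T}, independent e I /\ k <= #|I|) ->
  exists I : {set T},
    [/\ independent e I, k <= #|I| &
        forall Y : {set T}, unnecessary e X Y -> ~~ (Y \subset I)].
Proof.
move=> e_sym e_irr _ [I0 [indI0 kI0]].
have [n] := ubnP #|I0 :&: X|.
elim: n I0 indI0 kI0 => [//|n IH] I indI kI ltX.
have [[Y [uY YI]] | noY] := classic (exists Y, unnecessary e X Y /\ Y \subset I).
  have [I' [indI' cardI' ltX']] := unnecessary_swap e_sym e_irr indI uY YI.
  apply: (IH I') => //; first by rewrite cardI'.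
  by rewrite -ltnS; apply: leq_trans ltX' ltX.
by exists I; split=> // Y uY; apply/negP => YI; apply: noY; exists Y.
Qed.
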